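(* Let $G$ be an abelian Hausdorff topological group and $A\subseteq G$ with $0\notin A$. Then $A$ is absolutely Cauchy summable in $G$ if and only if the Kalton map $K_A:S_A\to G$ is continuous.
   Context: For $a\in G$, $\langle a\rangle$ is the cyclic subgroup generated by $a$ with the subspace topology. $P_A=\prod_{a\in A}\langle a\rangle$ carries the Tychonoff product topology and $S_A=\bigoplus_{a\in A}\langle a\rangle$ (finitely supported elements of $P_A$) the subspace topology. The Kalton map $K_A:S_A\to G$ is the unique group homomorphism extending each inclusion $\langle a\rangle\to G$, $a\in A$. $A$ is absolutely Cauchy summable if for every neighbourhood $U$ of $0$ there is a finite $F\subseteq A$ such that the subgroup $\langle A\setminus F\rangle$ generated by $A\setminus F$ is contained in $U$. *)

From HB Require Import structures.
From mathcomp Require Import all_boot all_order all_algebra.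
From mathcomp Require Import all_classical all_reals all_analysis.
Unset Printing Implicit Defensive.
Import Order.TTheory GRing.Theory Num.Theory.
Local Open Scope classical_set_scope.
Local Open Scope ring_scope.

Section Kalton.
Variable G : topologicalZmodType.

Definition is_subgroup (H : set G) : Prop :=
  H 0 /\ (forall x y, H x -> H y -> H (x - y)).

Definition gen_subgroup (B : set G) : set G :=
  [set x | forall H : set G, is_subgroup H -> B `<=` H -> H x].

Definition cyc (a : G) : set G := gen_subgroup [set a].

Definition abs_cauchy_summable (A : set G) : Prop :=
  forall U : set G, nbhs (0 : G) U ->
    exists F : set G, [/\ finite_set F, F `<=` A & gen_subgroup (A `\` F) `<=` U].

Definition idx (A : set G) := {a : G | a \in A}.

(* P_A with the Tychonoff product topology: functions on A with values in G,
   with the pointwise (product) topology; P_A is the subspace of those f with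
   f a \in <a> for all a. *)
Definition PA (A : set G) : set {ptws idx A -> G} :=
  [set f | forall i : idx A, cyc (val i) (f i)].

Definition SA (A : set G) : set {ptws idx A -> G} :=
  [set f | PA A f /\ finite_set [set i | f i != 0]].

Definition Kalton (A : set G) (f : {ptws idx A -> G}) : G :=
  (\sum_(i \in [set: idx A]) f i)%R.

End Kalton.

Arguments is_subgroup {G}.
Arguments gen_subgroup {G}.
Arguments cyc {G}.
Arguments abs_cauchy_summable {G}.
Arguments idx {G}.
Arguments PA {G}.
Arguments SA {G}.
Arguments Kalton {G}.

From HB Require Import structures.
From mathcomp Require Import all_boot all_order all_algebra.
From mathcomp Require Import all_classical all_reals all_analysis.
From mathcomp Require Import finmap.
Import Order.TTheory GRing.Theory Num.Theory.
Local Open Scope classical_set_scope.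
Local Open Scope ring_scope.

(** If [K_A] is continuous at [0], some basic neighbourhood of [0] in the
    product, namely the elements vanishing on a finite set [T] of coordinates,
    is mapped into a given neighbourhood [U]; the images of these elements form
    a subgroup containing [A \ T], hence [<A \ T>] lies in [U].
    Conversely, write [K_A f] as [K_A x0] plus the finitely many increments
    [f a - x0 a] with [a] in the finite set [F] given by summability, plus the
    remaining increments, which lie in [<a>] for [a] in [A \ F] and thus sum to
    an element of [<A \ F>]: the first part is small near [x0] by continuity of
    the coordinates, the second by the choice of [F]. *)

Section TopologicalZmoduleLimits.
Context {G : topologicalZmodType}.

Lemma tzmod_cvgD {T : Type} {F : set_system T} {FF : Filter F}
    {f g : T -> G} {a b : G} :
  f @ F --> a -> g @ F --> b -> (fun x => f x + g x) @ F --> a + b.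
Proof.
by move=> fa gb; apply: cvg_comp (cvg_pair fa gb) (@add_continuous G (a, b)).
Qed.

Lemma tzmod_cvg_sum0 {T I : Type} {F : set_system T} {FF : Filter F} (s : seq I)
    (f : I -> T -> G) :
  (forall i, f i @ F --> 0) -> (fun x => \sum_(i <- s) f i x) @ F --> 0.
Proof.
move=> f0; elim: s => [|j s IHs].
  by under eq_fun do rewrite big_nil; exact: cvg_cst.
have -> : (fun x => \sum_(i <- j :: s) f i x) = (fun x => f j x + \sum_(i <- s) f i x).
  by apply/funext => x; rewrite big_cons.
by have := tzmod_cvgD (FF := FF) (f0 j) IHs; rewrite addr0.
Qed.

Lemma nbhs_add_split {c : G} {U : set G} : nbhs c U ->
  exists2 W : set G * set G, nbhs 0 W.1 /\ nbhs 0 W.2 &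
    forall w1 w2, W.1 w1 -> W.2 w2 -> U (c + (w1 + w2)).
Proof.
have cvgc : (fun p : G * G => c + (p.1 + p.2)) @ nbhs (0, 0) --> c + (0 + 0).
  by apply: tzmod_cvgD; [exact: cvg_cst | exact: tzmod_cvgD cvg_fst cvg_snd].
rewrite !addr0 in cvgc.
move=> /cvgc [W [W1 W2] sW]; exists W => // w1 w2 *; exact: (sW (w1, w2)).
Qed.

Lemma cvg_coordinate_sum0 (I : eqType) (s : seq I) (x0 : {ptws I -> G}) :
  (fun f : {ptws I -> G} => \sum_(i <- s) (f i - x0 i)) @ x0 --> 0.
Proof.
apply: (tzmod_cvg_sum0 (FF := nbhs_filter x0)) => i; rewrite -(subrr (x0 i)).
exact: (tzmod_cvgD (FF := nbhs_filter x0)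
  (@proj_continuous I (fun=> G) i x0) (cvg_cst _)).
Qed.

End TopologicalZmoduleLimits.

Lemma cvg_agree_on_finite (I : Type) (T : topologicalType) (g : {ptws I -> T}) :
  filter_from finite_set
    (fun F => [set f : {ptws I -> T} | forall i, F i -> f i = g i]) --> g.
Proof.
have FF : Filter (filter_from finite_set
    (fun F => [set f : {ptws I -> T} | forall i, F i -> f i = g i])).
  apply: filter_from_filter; first by exists set0.
  move=> F1 F2 fin1 fin2; exists (F1 `|` F2); first by rewrite finite_setU.
  by move=> f fg; split=> i Fi; apply: fg; [left|right].
apply/cvg_sup => i Q [B [[W oW <-] Bg] BQ].
exists [set i]; first exact: finite_set1.
by move=> f fg; apply: BQ => /=; rewrite fg.
Qed.

Section Subgroups.
Context {G : topologicalZmodType}.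
Implicit Types (B H : set G).

Lemma subgroupD H x y : is_subgroup H -> H x -> H y -> H (x + y).
Proof.
move=> [H0 HB] Hx Hy; have Hny : H (- y) by rewrite -sub0r; apply: HB.
by rewrite -(opprK y); apply: HB.
Qed.

Lemma subgroup_sum H (I : Type) (s : seq I) (f : I -> G) :
  is_subgroup H -> (forall i, H (f i)) -> H (\sum_(i <- s) f i).
Proof.
move=> sH Hf; elim: s => [|j s IHs]; first by rewrite big_nil; case: sH.
by rewrite big_cons; apply: subgroupD.
Qed.

Lemma gen_subgroup_subgroup B : is_subgroup (gen_subgroup B).
Proof.
split=> [H [] //|x y Bx By H sH BH].
by case: (sH) => _; apply; [apply: Bx | apply: By].
Qed.

Lemma sub_gen_subgroup B : B `<=` gen_subgroup B.
Proof. by move=> x Bx H _; apply. Qed.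

Lemma gen_subgroup_min B H : is_subgroup H -> B `<=` H -> gen_subgroup B `<=` H.
Proof. by move=> sH BH x; apply. Qed.

Lemma cyc_subgroup (a : G) : is_subgroup (cyc a).
Proof. exact: gen_subgroup_subgroup. Qed.

Lemma mem_cyc (a : G) : cyc a a.
Proof. exact: sub_gen_subgroup. Qed.

End Subgroups.

Section KaltonMap.
Context {G : topologicalZmodType} (A : set G).
Implicit Types f g : {ptws idx A -> G}.

Lemma Kalton_fsetE f (X : {fset idx A}) :
  (forall i, i \notin X -> f i = 0) -> Kalton A f = \sum_(i <- X) f i.
Proof. exact: fsbigTE. Qed.

Lemma SA_fsupport f :
  SA A f -> exists X : {fset idx A}, forall i, i \notin X -> f i = 0.
Proof.
move=> [_ finf]; exists (fset_set [set i | f i != 0]) => i.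
by rewrite in_fset_set // notin_setE /= => /negP/negPn/eqP.
Qed.

Lemma SA0 : SA A 0.
Proof.
split=> [i|]; first by case: (cyc_subgroup (val i)).
by rewrite (_ : [set i | _] = set0) //; apply/seteqP; split=> i //=; rewrite eqxx.
Qed.

Lemma SAB f g : SA A f -> SA A g -> SA A (f - g).
Proof.
move=> [Pf finf] [Pg fing]; split=> [i|].
  by case: (cyc_subgroup (val i)) => _; apply.
apply: (sub_finite_set (B := [set i | f i != 0] `|` [set i | g i != 0])).
  move=> i /=; rewrite !fctE; have [->|] := eqVneq (f i) 0; last by left.
  by rewrite sub0r oppr_eq0; right.
by rewrite finite_setU.
Qed.

Lemma Kalton0 : Kalton A 0 = 0.
Proof. exact: fsbig1. Qed.

Lemma KaltonB f g : SA A f -> SA A g -> Kalton A (f - g) = Kalton A f - Kalton A g.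
Proof.
move=> /SA_fsupport [X fX] /SA_fsupport [Y gY].
have XY i : i \notin (X `|` Y)%fset -> i \notin X /\ i \notin Y.
  by rewrite inE negb_or => /andP.
rewrite !(Kalton_fsetE _ (X `|` Y)%fset) ?sumrB // => i /XY[];
  by [move/fX | move=> _ /gY | rewrite !fctE => /fX -> /gY ->; rewrite subr0].
Qed.

Definition coord_delta (i : idx A) : {ptws idx A -> G} :=
  fun j => if j == i then val i else 0.

Lemma SA_coord_delta i : SA A (coord_delta i).
Proof.
split=> [j|].
  rewrite /coord_delta; case: eqP => [->|_]; first exact: mem_cyc.
  by case: (cyc_subgroup (val j)).
apply: (sub_finite_set (B := [set i])); last exact: finite_set1.
by move=> j /=; rewrite /coord_delta; case: (j =P i) => // _; rewrite eqxx.
Qed.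

Lemma Kalton_coord_delta i : Kalton A (coord_delta i) = val i.
Proof.
rewrite (Kalton_fsetE _ [fset i]%fset) ?big_seq_fset1 /coord_delta ?eqxx //.
by move=> j; rewrite in_fset1 => /negbTE ->.
Qed.

Lemma gen_subgroup_sub_Kalton_vanishing (T : set (idx A)) :
  gen_subgroup (A `\` val @` T) `<=`
  Kalton A @` [set f | SA A f /\ forall i, T i -> f i = 0].
Proof.
have sH : is_subgroup (Kalton A @` [set f | SA A f /\ forall i, T i -> f i = 0]).
  split; first by exists 0; rewrite ?Kalton0 //; split; [exact: SA0 |].
  move=> _ _ [f [Sf f0] <-] [g [Sg g0] <-]; exists (f - g); last exact: KaltonB.
  by split=> [|i Ti]; [exact: SAB | rewrite !fctE f0 ?g0 ?subr0].
apply: gen_subgroup_min sH _ => a [Aa aT]; pose i : idx A := exist _ a (mem_set Aa).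
exists (coord_delta i); last exact: Kalton_coord_delta.
split=> [|j Tj]; first exact: SA_coord_delta.
by rewrite /coord_delta; case: eqP => // ji; case: aT; exists j => //; rewrite ji.
Qed.

Lemma Kalton_tail_gen_subgroup (B : set G) (X : {fset idx A}) f :
  (forall i, i \notin X -> B (val i)) -> SA A f ->
  gen_subgroup B (Kalton A f - \sum_(i <- X) f i).
Proof.
move=> XB Sf; have [Y fY] := SA_fsupport _ Sf; pose Z := (X `|` Y)%fset.
have -> : \sum_(i <- X) f i = \sum_(i <- Z) (if i \in X then f i else 0).
  rewrite -(big_fset_incl _ (fsubsetUl X Y)); last by move=> i _ /negbTE ->.
  by rewrite big_seq [RHS]big_seq; apply: eq_bigr => i ->.
rewrite (Kalton_fsetE _ Z); last by move=> i; rewrite inE negb_or => /andP[_ /fY].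
rewrite -sumrB; apply: subgroup_sum (gen_subgroup_subgroup B) _ => i.
case: ifPn => [_|/XB Bi]; first by rewrite subrr; case: (gen_subgroup_subgroup B).
rewrite subr0; apply: gen_subgroup_min (gen_subgroup_subgroup B) _ _ (Sf.1 i).
by move=> _ ->; exact: sub_gen_subgroup.
Qed.

End KaltonMap.

Lemma Kalton_continuous_abs_cauchy_summable (G : topologicalZmodType) (A : set G) :
  {within SA A, continuous (Kalton A)} -> abs_cauchy_summable A.
Proof.
move=> /subspace_continuousP /(_ 0 (SA0 A)) cvgK0 U U0.
have /cvg_agree_on_finite [T finT TU] :
    within (SA A) (nbhs (0 : {ptws idx A -> G})) (Kalton A @^-1` U).
  by apply: cvgK0; rewrite /from_subspace Kalton0.
exists (val @` T); split; first exact: finite_image.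
  by move=> _ [i _ <-]; exact: set_mem (valP i).
by move=> _ /gen_subgroup_sub_Kalton_vanishing [f [Sf f0] <-]; exact: TU.
Qed.

Lemma abs_cauchy_summable_Kalton_continuous (G : topologicalZmodType) (A : set G) :
  abs_cauchy_summable A -> {within SA A, continuous (Kalton A)}.
Proof.
move=> sumA; apply/subspace_continuousP => x0 Sx0 U /= UKx0.
have [[W1 W2] /= [W1_0 W2_0] W12U] := nbhs_add_split UKx0.
have [F [finF _ FW2]] := sumA W2 W2_0.
pose X := fset_set [set i : idx A | F (val i)].
have XAF i : i \notin X -> (A `\` F) (val i).
  rewrite in_fset_set; last exact: finite_preimage (in2W val_inj) finF.
  by rewrite notin_setE => Fi; split; [exact: set_mem (valP i) | ].
suff : nbhs x0 [set f | SA A f -> U (Kalton A f)] by [].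
have : nbhs x0 [set f | W1 (\sum_(i <- X) (f i - x0 i))].
  exact: cvg_coordinate_sum0 W1_0.
apply: filterS => f /= W1f Sf.
have Sd : SA A (f - x0) by exact: SAB.
rewrite -[Kalton A f](subrKC (Kalton A x0)) -KaltonB //.
rewrite -[Kalton A (f - x0)](subrKC (\sum_(i <- X) (f - x0) i)).
by apply: W12U => //; apply: FW2; exact: Kalton_tail_gen_subgroup.
Qed.

Theorem theorem3p5 (G : topologicalZmodType) (hG : hausdorff_space G)
  (A : set G) (hA0 : ~ A 0) :
  abs_cauchy_summable A <-> {within SA A, continuous (Kalton A)}.
Proof.
split; first exact: abs_cauchy_summable_Kalton_continuous.
exact: Kalton_continuous_abs_cauchy_summable.
Qed.
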